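(* Let $M$ be a set of $5$ indivisible items. There exist strict monotone preferences $\preceq_1,\preceq_2$ over $2^M$ for two agents and a Pareto optimal allocation $\mathcal S=(S_1,S_2)$ such that for no budget profile $(b_1,b_2)$ with $b_1,b_2>0$ do there exist prices $p$ making $(\mathcal S,p)$ a competitive equilibrium.
   Context: A monotone preference $\preceq_i$ is a complete and transitive weak order over all subsets of $M$ such that $S\preceq_i T$ whenever $S\subseteq T$; it is strict if for any $S\ne T$ either $S\prec_i T$ or $T\prec_i S$ (where $S\prec_i T$ means $S\preceq_i T$ and not $T\preceq_i S$). An allocation is a partition $(S_1,S_2)$ of all items of $M$ between the agents. An allocation $\mathcal S$ is Pareto optimal if for every allocation $\mathcal S'\ne\mathcal S$ there is an agent $i$ with $S'_i\prec_i S_i$. Given item prices $p$ with $p(S)=\sum_{j\in S}p_j$, a bundle $S$ is demanded by agent $i$ with budget $b_i$ if $p(S)\le b_i$ and $p(T)>b_i$ for every $T$ with $S\prec_i T$. $(\mathcal S,p)$ is a competitive equilibrium if $S_i$ is demanded by agent $i$ at prices $p$ for each $i$. *)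

From HB Require Import structures.
From mathcomp Require Import all_boot all_order all_algebra.
Set Implicit Arguments. Unset Strict Implicit. Unset Printing Implicit Defensive.
Import Order.TTheory GRing.Theory Num.Theory.
Local Open Scope ring_scope.

(* A preference over bundles of items (subsets of the finite item type T):
   pref S T  means  S ⪯ T. *)
Definition pref (T : finType) := {set T} -> {set T} -> bool.

Section Defs.
Variable T : finType.

Definition spref (le : pref T) (S U : {set T}) : bool := le S U && ~~ le U S.

Definition complete_pref (le : pref T) : Prop := forall S U, le S U || le U S.
Definition transitive_pref (le : pref T) : Prop :=
  forall S U V, le S U -> le U V -> le S V.
Definition monotone_pref (le : pref T) : Prop :=
  complete_pref le /\ transitive_pref le /\ (forall S U : {set T}, S \subset U -> le S U).
Definition strict_pref (le : pref T) : Prop :=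
  forall S U, S != U -> spref le S U || spref le U S.

Definition allocation2 (A : {set T} * {set T}) : Prop :=
  [disjoint A.1 & A.2] /\ A.1 :|: A.2 = setT.

Definition pareto_optimal2 (le1 le2 : pref T) (A : {set T} * {set T}) : Prop :=
  allocation2 A /\
  forall A', allocation2 A' -> A' <> A -> spref le1 A'.1 A.1 \/ spref le2 A'.2 A.2.

Variable R : realFieldType.

Definition price (p : T -> R) (S : {set T}) : R := \sum_(j in S) p j.

Definition demanded (le : pref T) (b : R) (p : T -> R) (S : {set T}) : Prop :=
  price p S <= b /\ forall U, spref le S U -> b < price p U.

Definition competitive_eq2 (le1 le2 : pref T) (b1 b2 : R)
  (A : {set T} * {set T}) (p : T -> R) : Prop :=
  demanded le1 b1 p A.1 /\ demanded le2 b2 p A.2.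
End Defs.

(* Give agent 1 the bundle S0 = {0,3,4} and agent 2 its complement {1,2}.
   Agent 1 ranks every bundle containing G = {0,1,4} or its complement {2,3},
   or strictly containing S0, above S0, and S0 above everything else; agent 2
   does the same with ~: S0 and H = {0,2,4}, {1,3}.  Every bundle agent 1
   ranks above S0 meets every bundle agent 2 ranks at least as high as ~: S0,
   so no reallocation is weakly better for both: (S0, ~: S0) is Pareto
   optimal.  In an equilibrium agent 1 affords S0 but neither G nor ~: G, so
   2 p(S0) < p(G) + p(~: G) = p(M); likewise 2 p(~: S0) < p(M), and adding
   gives 2 p(M) < 2 p(M). *)

From mathcomp Require Import all_boot all_order all_algebra.

Set Implicit Arguments.
Unset Strict Implicit.
Unset Printing Implicit Defensive.

Import Order.TTheory GRing.Theory Num.Theory.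

Lemma ltn_radix (K a b x y : nat) : a < K -> x < y -> x * K + a < y * K + b.
Proof.
move=> ltaK ltxy; have : x.+1 * K <= y * K by rewrite leq_mul2r ltxy orbT.
rewrite mulSn => leK; apply: leq_trans (leq_addr b _); apply: leq_trans leK.
by rewrite addnC ltn_add2r.
Qed.

Section RankPreference.
Variable T : finType.
Implicit Types (r t : {set T} -> nat) (S U : {set T}).

Definition rank_pref r : pref T := fun S U => r S <= r U.

Lemma spref_rank_pref r S U : spref (rank_pref r) S U = (r S < r U).
Proof. by rewrite /spref /rank_pref -ltnNge andb_idl // => /ltnW. Qed.

Lemma rank_pref_monotone r :
  {homo r : S U / S \subset U >-> S <= U} -> monotone_pref (rank_pref r).
Proof.
move=> r_homo; split=> [S U|]; first exact: leq_total.
by split=> [S U V|]; [exact: leq_trans | exact: r_homo].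
Qed.

Lemma rank_pref_strict r : injective r -> strict_pref (rank_pref r).
Proof. by move=> r_inj S U; rewrite !spref_rank_pref -neq_ltn (inj_eq r_inj). Qed.

Lemma allocation2_setC (A : {set T} * {set T}) : allocation2 A <-> A.2 = ~: A.1.
Proof.
case: A => A1 A2; rewrite /allocation2 /=; split=> [[disA coverA]|->].
  apply/setP=> i; rewrite inE; have := in_setT i; rewrite -coverA inE.
  by case: (boolP (i \in A1)) => [/(disjointFr disA) ->|_ /= ->].
by rewrite -setI_eq0 setICr setUCr.
Qed.

Lemma pareto_optimal2_rank_pref r1 r2 S :
    (forall U, U != S -> r1 U < r1 S \/ r2 (~: U) < r2 (~: S)) ->
  pareto_optimal2 (rank_pref r1) (rank_pref r2) (S, ~: S).
Proof.
move=> worse; split=> [|[U V] /allocation2_setC /= -> neA]; first exact/allocation2_setC.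
rewrite /= !spref_rank_pref; apply: worse; by apply: contraPneq neA => ->.
Qed.

(* Lexicographic in (t, cardinality, enum_rank): the cardinality makes the
   rank monotone when t is, and enum_rank makes it injective. *)
Definition tier_rank t S : nat := (t S * #|T|.+1 + #|S|) * #|{set T}| + enum_rank S.

Lemma tier_rank_inj t : injective (tier_rank t).
Proof.
move=> S U /(congr1 (modn^~ #|{set T}|)).
by rewrite !modnMDl !modn_small ?ltn_ord // => /val_inj /enum_rank_inj.
Qed.

Lemma tier_rank_lt t S U : t S < t U -> tier_rank t S < tier_rank t U.
Proof. by move=> ltSU; apply/ltn_radix/ltn_radix; rewrite ?ltn_ord ?ltnS ?max_card. Qed.

Lemma tier_rank_homo t :
    {homo t : S U / S \subset U >-> S <= U} ->
  {homo tier_rank t : S U / S \subset U >-> S <= U}.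
Proof.
move=> t_homo S U sSU; have [->//|neSU] := eqVneq S U.
have ltSU : #|S| < #|U| by rewrite proper_card // properEneq neSU.
apply/ltnW/ltn_radix; first exact: ltn_ord.
by rewrite -addnS leq_add // leq_mul2r t_homo ?orbT.
Qed.

End RankPreference.

Section Tier.
Variables (T : finType) (S0 G : {set T}).

Definition tier (S : {set T}) : nat :=
  if [|| G \subset S, ~: G \subset S | S0 \proper S] then 2 else S0 == S.

Definition tier_pref : pref T := rank_pref (tier_rank tier).

Lemma tier_homo : {homo tier : S U / S \subset U >-> S <= U}.
Proof.
move=> S U sSU; rewrite /tier.
case: ifP => [/or3P[gS|gS|S0S]|_].
- by rewrite (subset_trans gS sSU).
- by rewrite (subset_trans gS sSU) orbT.
- by rewrite (proper_sub_trans S0S sSU) !orbT.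
case: eqP sSU => [<-|//]; rewrite subEproper => /orP[/eqP <-|->]; last by rewrite !orbT.
by rewrite eqxx; case: ifP.
Qed.

Lemma tier_eq2 S : (tier S == 2) = [|| G \subset S, ~: G \subset S | S0 \proper S].
Proof. by rewrite /tier; case: ifP => // _; case: (S0 == S). Qed.

Lemma tier_gt0 S : (0 < tier S) = [|| S0 \subset S, G \subset S | ~: G \subset S].
Proof.
rewrite /tier [S0 \subset S]subEproper.
by case: (S0 == S); case: (S0 \proper S); case: (G \subset S); case: (~: G \subset S).
Qed.

Lemma tier_neq2 S : tier S != 2 -> tier S = (S0 == S).
Proof. by rewrite /tier; case: ifP. Qed.

Lemma tier_base : ~~ (G \subset S0) -> ~~ (~: G \subset S0) -> tier S0 = 1.
Proof. by move=> /negbTE GS0 /negbTE GCS0; rewrite /tier GS0 GCS0 properxx eqxx. Qed.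

Lemma tier_goal : tier G = 2.
Proof. by rewrite /tier subxx. Qed.

Lemma tier_goalC : tier (~: G) = 2.
Proof. by rewrite /tier subxx orbT. Qed.

Lemma tier_pref_monotone : monotone_pref tier_pref.
Proof. exact: rank_pref_monotone (tier_rank_homo tier_homo). Qed.

Lemma tier_pref_strict : strict_pref tier_pref.
Proof. exact: rank_pref_strict (@tier_rank_inj _ _). Qed.

Lemma spref_tier_pref S U : tier S < tier U -> spref tier_pref S U.
Proof. by rewrite spref_rank_pref; apply: tier_rank_lt. Qed.

End Tier.

Section Prices.
Variables (T : finType) (R : realFieldType) (p : T -> R).
Local Open Scope ring_scope.

Lemma price_setC S : price p S + price p (~: S) = price p setT.
Proof. by rewrite /price [RHS](big_setID S) setTI setTD. Qed.

Lemma demanded_price_lt le b S G :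
    demanded le b p S -> spref le S G -> spref le S (~: G) ->
  price p S *+ 2 < price p setT.
Proof.
move=> [leSb better] /better ltG /better ltGC.
by rewrite -(price_setC G) mulr2n (le_lt_trans (lerD leSb leSb)) ?ltrD.
Qed.

Lemma no_competitive_eq2 le1 le2 b1 b2 S G H :
    spref le1 S G -> spref le1 S (~: G) ->
    spref le2 (~: S) H -> spref le2 (~: S) (~: H) ->
  ~ competitive_eq2 le1 le2 b1 b2 (S, ~: S) p.
Proof.
move=> SG SGC SH SHC [dem1 dem2].
have := ltrD (demanded_price_lt dem1 SG SGC) (demanded_price_lt dem2 SH SHC).
by rewrite -mulrnDl price_setC mulr2n ltxx.
Qed.

End Prices.

Section TierEconomy.
Variables (T : finType) (S0 G H : {set T}).
Hypothesis goals_meet :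
  {in [:: G; ~: G] & [:: ~: S0; H; ~: H], forall X Z : {set T}, ~~ [disjoint X & Z]}.
Hypothesis S0_meets_goals : {in [:: H; ~: H], forall Z : {set T}, ~~ [disjoint S0 & Z]}.

Local Notation t1 := (tier S0 G).
Local Notation t2 := (tier (~: S0) H).

Lemma tier1_base : t1 S0 = 1.
Proof. by apply: tier_base; rewrite subsets_disjoint goals_meet // !inE eqxx ?orbT. Qed.

Lemma tier2_base : t2 (~: S0) = 1.
Proof.
by apply: tier_base;
  rewrite subsets_disjoint setCK disjoint_sym S0_meets_goals // !inE eqxx ?orbT.
Qed.

Lemma tier1_eq2_tier2C_eq0 U : t1 U = 2 -> t2 (~: U) = 0.
Proof.
have meetC (X Z : {set T}) : X \subset U -> ~~ [disjoint X & Z] -> (Z \subset ~: U) = false.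
  by move=> XU; apply: contraNF => ZU; rewrite disjoints_subset (subset_trans XU) // subsetC.
move=> /eqP; rewrite tier_eq2 => t1U; apply/eqP; rewrite eqn0Ngt tier_gt0.
have [S0U|S0nU] := boolP (S0 \proper U).
  have [_ /negbTE nUS0] := andP S0U.
  have nZ Z : Z \in [:: H; ~: H] -> (Z \subset ~: U) = false.
    by move=> /S0_meets_goals; apply: meetC; apply: proper_sub.
  by rewrite setCS nUS0 !nZ ?inE ?eqxx ?orbT.
have [X XG XU] : exists2 X, X \in [:: G; ~: G] & X \subset U.
  move: t1U; rewrite (negbTE S0nU) orbF => /orP[];
    by [exists G; rewrite ?inE ?eqxx | exists (~: G); rewrite ?inE ?eqxx ?orbT].
have nZ Z : Z \in [:: ~: S0; H; ~: H] -> (Z \subset ~: U) = false.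
  by move=> /(goals_meet XG); apply: meetC.
by rewrite !nZ ?inE ?eqxx ?orbT.
Qed.

Lemma tier_prefs_pareto_optimal :
  pareto_optimal2 (tier_pref S0 G) (tier_pref (~: S0) H) (S0, ~: S0).
Proof.
apply: pareto_optimal2_rank_pref => U neU; have [t1U|t1U] := eqVneq (t1 U) 2.
  by right; apply: tier_rank_lt; rewrite tier1_eq2_tier2C_eq0 // tier2_base.
by left; apply: tier_rank_lt; rewrite tier_neq2 // tier1_base eq_sym (negbTE neU).
Qed.

Lemma tier_prefs_no_competitive_eq2 (R : realFieldType) (b1 b2 : R) p :
  ~ competitive_eq2 (tier_pref S0 G) (tier_pref (~: S0) H) b1 b2 (S0, ~: S0) p.
Proof.
apply: (no_competitive_eq2 (G := G) (H := H)); apply: spref_tier_pref;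
  by rewrite ?tier1_base ?tier2_base ?tier_goal ?tier_goalC.
Qed.

End TierEconomy.

Definition bundle n (l : seq nat) : {set 'I_n} := [set i : 'I_n | val i \in l].

Lemma setC_bundle n l : ~: bundle n l = bundle n [seq i <- iota 0 n | i \notin l].
Proof. by apply/setP=> i; rewrite !inE mem_filter mem_iota add0n ltn_ord leq0n !andbT. Qed.

Lemma disjoint_bundle n l l' :
  [disjoint bundle n l & bundle n l'] = ~~ has (fun i => i \in l') [seq i <- l | i < n].
Proof.
apply/idP/hasPn => [disj i | l_l'].
  rewrite mem_filter => /andP[ltin il]; apply/negP => il'.
  by have := disjointFr disj (x := Ordinal ltin); rewrite !inE il il' => /(_ isT).
rewrite disjoint_subset; apply/subsetP => i; rewrite !inE => il.
by apply: l_l'; rewrite mem_filter il ltn_ord.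
Qed.

Local Open Scope ring_scope.

Theorem mainTheorem4 (R : realFieldType) :
  exists (le1 le2 : pref 'I_5) (A : {set 'I_5} * {set 'I_5}),
    [/\ monotone_pref le1, strict_pref le1,
        monotone_pref le2, strict_pref le2
      & pareto_optimal2 le1 le2 A] /\
    forall b1 b2 : R, 0 < b1 -> 0 < b2 ->
      ~ exists p : 'I_5 -> R, competitive_eq2 le1 le2 b1 b2 A p.
Proof.
pose S0 := bundle 5 [:: 0; 3; 4].
pose G := bundle 5 [:: 0; 1; 4].
pose H := bundle 5 [:: 0; 2; 4].
have goals_meet : {in [:: G; ~: G] & [:: ~: S0; H; ~: H],
                   forall X Z : {set 'I_5}, ~~ [disjoint X & Z]}.
  move=> X Z; rewrite !inE => /orP[]/eqP-> /or3P[]/eqP->;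
    by rewrite /S0 /G /H ?setC_bundle disjoint_bundle.
have S0_meets_goals : {in [:: H; ~: H], forall Z : {set 'I_5}, ~~ [disjoint S0 & Z]}.
  by move=> Z; rewrite !inE => /orP[]/eqP->; rewrite /S0 /H ?setC_bundle disjoint_bundle.
exists (tier_pref S0 G), (tier_pref (~: S0) H), (S0, ~: S0).
split=> [|b1 b2 _ _ [p]]; last exact: tier_prefs_no_competitive_eq2.
split; [exact: tier_pref_monotone | exact: tier_pref_strict |
        exact: tier_pref_monotone | exact: tier_pref_strict |].
exact: tier_prefs_pareto_optimal goals_meet S0_meets_goals.
Qed.
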